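(* $\mathrm{ex}_3(5,\mathcal{B})=5$ and $\mathrm{ex}_3(6,\mathcal{B})=8$; that is, every triple system on $5$ vertices with at least $6$ triples contains a Berge-$K_4$ while some $5$-vertex triple system with $5$ triples does not, and every triple system on $6$ vertices with at least $9$ triples contains a Berge-$K_4$ while some $6$-vertex triple system with $8$ triples does not.
   Context: A triple system is a $3$-uniform hypergraph. A Berge-$K_4$ in a triple system is a configuration consisting of four distinct vertices $v_1,v_2,v_3,v_4$ and six distinct triples $e_{ij}$ ($1\le i<j\le 4$) of the system with $\{v_i,v_j\}\subset e_{ij}$. $\mathcal{B}$ denotes the family of Berge-$K_4$ configurations, and $\mathrm{ex}_3(n,\mathcal{B})$ is the maximum number of triples in a triple system on $n$ vertices containing no Berge-$K_4$. *)

From mathcomp Require Import all_boot all_order.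
Set Implicit Arguments. Unset Strict Implicit. Unset Printing Implicit Defensive.

Definition triple_system (n : nat) (H : {set {set 'I_n}}) : bool :=
  [forall e in H, #|e| == 3].

Definition has_BergeK4 (n : nat) (H : {set {set 'I_n}}) : Prop :=
  exists (v : 'I_4 -> 'I_n) (e : 'I_4 -> 'I_4 -> {set 'I_n}),
    injective v /\
    (forall i j : 'I_4, i < j -> e i j \in H /\ [set v i; v j] \subset e i j) /\
    (forall i j k l : 'I_4, i < j -> k < l -> e i j = e k l -> i = k /\ j = l).

From mathcomp Require Import all_boot all_order.
Set Implicit Arguments. Unset Strict Implicit. Unset Printing Implicit Defensive.

(* Both values are obtained by exhaustive computation.  A triple is encoded as
   the increasing list of its vertices, and a Berge-K4 with core vertices q is
   a system of distinct representatives: six distinct triples, one for each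
   pair of vertices of q.  For the upper bounds, a branch-and-bound enumeration
   of the sub-collections of the C(n,3) triples closes a branch as soon as its
   chosen triples contain a Berge-K4 or it can no longer reach the target size.
   The test is sound for any list of candidate cores, so the search only tries
   increasing ones; the lower-bound systems are checked against all vertex
   quadruples, for which the test is also complete. *)

Section Words.
Variable T : eqType.

Fixpoint words (k : nat) (A : seq T) : seq (seq T) :=
  if k is k'.+1 then [seq a :: w | a <- A, w <- words k' A] else [:: [::]].

Lemma mem_words k A w : (w \in words k A) = (size w == k) && all (mem A) w.
Proof.
elim: k w => [|k IHk] [|a w] //=.
  by apply/allpairsP => -[[b u] [_ _]].
rewrite eqSS; apply/allpairsP/and3P => [[[b u] /= [bA] + [-> ->]] | [w_k aA wA]].
  by rewrite IHk => /andP [].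
by exists (a, w); rewrite /= IHk w_k wA.
Qed.

End Words.

Definition ksubsets (k n : nat) : seq (seq nat) :=
  [seq w <- words k (iota 0 n) | sorted ltn w].

Lemma mem_ksubsets k n w :
  (w \in ksubsets k n) = [&& size w == k, sorted ltn w & all (gtn n) w].
Proof.
rewrite mem_filter mem_words (@eq_all _ _ (gtn n)) => [|x]; last by rewrite /= mem_iota.
by rewrite andbCA andbA.
Qed.

Definition set_of n (w : seq nat) : {set 'I_n} := [set x : 'I_n | (x : nat) \in w].

Lemma mem_set_of n w (x : 'I_n) : (x \in set_of n w) = ((x : nat) \in w).
Proof. by rewrite inE. Qed.

Lemma set_of_inj k n : {in ksubsets k n &, injective (set_of n)}.
Proof.
move=> w w'; rewrite !mem_ksubsets => /and3P [_ sw wn] /and3P [_ sw' wn'] eq_ww'.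
apply: (irr_sorted_eq ltn_trans ltnn sw sw') => x.
have [xn | nx] := ltnP x n.
  by have /setP/(_ (Ordinal xn)) := eq_ww'; rewrite !inE.
have notin u : all (gtn n) u -> x \notin u.
  by move=> /allP un; apply/negP => /un /=; rewrite ltnNge nx.
by rewrite (negbTE (notin _ wn)) (negbTE (notin _ wn')).
Qed.

Lemma card_set_of n w : uniq w -> all (gtn n) w -> #|set_of n w| = size w.
Proof.
move=> uw wn; have -> : set_of n w = [set x in (pmap insub w : seq 'I_n)].
  by apply/setP => x; rewrite !inE mem_pmap_sub.
rewrite cardsE; have /card_uniqP -> : uniq (pmap insub w : seq 'I_n) by exact: pmap_sub_uniq.
by rewrite size_pmap_sub; apply/eqP; rewrite -all_count.
Qed.

Lemma set_of_enum n (e : {set 'I_n}) :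
  exists2 w, w \in ksubsets #|e| n & set_of n w = e.
Proof.
exists (sort leq (map val (enum e))); last first.
  by apply/setP => x; rewrite inE mem_sort (mem_map val_inj) mem_enum.
have uw : uniq (sort leq (map val (enum e))).
  by rewrite sort_uniq (map_inj_uniq val_inj) enum_uniq.
rewrite mem_ksubsets size_sort size_map -cardE eqxx ltn_sorted_uniq_leq uw.
rewrite (sort_sorted leq_total) /=.
by apply/allP => x; rewrite mem_sort => /mapP [y _ ->]; exact: ltn_ord.
Qed.

Section DistinctRepresentatives.
Variables (A S : eqType) (fits : A -> S -> bool) (L : seq S).

(* [find] and [if] rather than [has] and [&&] (here and in [forced] and
   [bergeK4b]): under the call-by-value evaluation of [vm_compute] only they
   stop at the first success. *)
Fixpoint sdr_avoiding (used : seq S) (ds : seq A) : bool :=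
  if ds is d :: ds' then
    let extends s :=
      if fits d s && (s \notin used) then sdr_avoiding (s :: used) ds' else false in
    find extends L < size L
  else true.

Definition sdr := sdr_avoiding [::].

Lemma sdr_avoidingP used ds :
  reflect (exists es, [/\ uniq es, {subset es <= L},
                          all (fun s => s \notin used) es & all2 fits ds es])
          (sdr_avoiding used ds).
Proof.
elim: ds used => [|d ds IH] used /=; first by apply: ReflectT; exists [::].
rewrite -has_find; apply: (iffP hasP) => [[s sL] | ].
  case/andP=> /andP [fit_s s_new] /IH [es [ues esL es_new fit_es]].
  exists (s :: es); split => /=.
  - by rewrite ues andbT; apply/negP => /(allP es_new); rewrite inE eqxx.
  - by move=> x; rewrite inE => /predU1P [-> // | /esL].
  - by rewrite s_new; apply/allP => x /(allP es_new); rewrite inE negb_or => /andP [].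
  - by rewrite fit_s.
case=> -[|s es] [] //= /andP [s_es ues] esL /andP [s_new es_new] /andP [fit_s fit_es].
exists s; first by apply: esL; rewrite inE eqxx.
rewrite fit_s s_new /=; apply/IH; exists es; split => //.
  by move=> x xes; apply: esL; rewrite inE xes orbT.
apply/allP => x xes; rewrite inE negb_or (allP es_new x xes) andbT.
by apply: contraNneq s_es => <-.
Qed.

Lemma sdr_rep (s0 : S) ds : uniq ds -> sdr ds ->
  exists f : A -> S, {in ds, forall d, f d \in L /\ fits d (f d)} /\ {in ds &, injective f}.
Proof.
move=> uds /sdr_avoidingP [es [ues esL _ fit]].
have /andP [/eqP size_es fit_zip] :
  (size ds == size es) && all [pred p | fits p.1 p.2] (zip ds es) by rewrite -all2E.
exists (fun d => nth s0 es (index d ds)); split.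
  move=> d dds; have i_lt : index d ds < size es by rewrite -size_es index_mem.
  split; first exact/esL/mem_nth.
  have /(allP fit_zip) : nth (d, s0) (zip ds es) (index d ds) \in zip ds es.
    by rewrite mem_nth // size_zip -size_es minnn index_mem.
  by rewrite nth_zip // nth_index.
move=> d d' dds d'ds /eqP; rewrite nth_uniq -?size_es ?index_mem // => /eqP.
exact: index_inj.
Qed.

Lemma sdr_of_rep ds (f : A -> S) : uniq ds ->
  {in ds, forall d, f d \in L /\ fits d (f d)} -> {in ds &, injective f} -> sdr ds.
Proof.
move=> uds fP finj; apply/sdr_avoidingP; exists (map f ds); split.
- by rewrite map_inj_in_uniq.
- by move=> _ /mapP [d dds ->]; have [] := fP d dds.
- exact/allP.
- elim: ds uds fP {finj} => //= d ds IH /andP [_ uds] fP.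
  rewrite (fP d (mem_head _ _)).2 IH // => d' d'ds.
  by apply: fP; rewrite inE d'ds orbT.
Qed.

End DistinctRepresentatives.

Section Covering.
Variables (T : eqType) (found : seq T -> bool) (K : nat).

Fixpoint forced (chosen rest : seq T) : bool :=
  if rest is x :: rest' then
    if size chosen + size rest < K then true
    else if found (x :: chosen) then forced chosen rest'
    else forced (x :: chosen) rest' && forced chosen rest'
  else size chosen < K.

Lemma forcedP chosen rest : forced chosen rest ->
  forall s, subseq s rest -> K <= size chosen + size s ->
  exists2 t, {subset t <= chosen ++ s} & found t.
Proof.
elim: rest chosen => [|x rest IH] chosen.
  move=> small s; rewrite subseq0 => /eqP -> /=.
  by rewrite addn0 leqNgt; move: small => /= ->.
rewrite [forced _ _]/=; case: ifP => [small _ s /size_subseq sub_s large | _ forced_x_rest].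
  by move: small; rewrite ltnNge (leq_trans large) // leq_add2l.
have without_x : forced chosen rest by case: ifP forced_x_rest => // _ /andP [].
case=> [|y s] /=; first by move=> _; apply: IH without_x [::] (sub0seq _).
case: eqP => [-> sub_s large | _]; last exact: IH without_x (y :: s).
have chosen_x_s : {subset (x :: chosen) ++ s <= chosen ++ x :: s}.
  by move=> z; rewrite /= !inE !mem_cat !inE orbCA.
case: ifP forced_x_rest => [found_x _ | _ /andP [forced_x _]].
  by exists (x :: chosen) => // z z_x; apply: chosen_x_s; rewrite mem_cat z_x.
have [|t t_sub found_t] := IH _ forced_x s sub_s; first by rewrite addSn -addnS.
by exists t => // z /t_sub /chosen_x_s.
Qed.

End Covering.

Definition ipairs : seq (nat * nat) :=
  [seq p <- [seq (i, j) | i <- iota 0 4, j <- iota 0 4] | p.1 < p.2].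

Lemma mem_ipairs i j : ((i, j) \in ipairs) = (i < j < 4).
Proof.
rewrite mem_filter; apply/andP/andP => -[lt_ij mem_ij]; split => //.
  by move: mem_ij => /allpairsP [[i' j'] [_ + [_ ->]]]; rewrite mem_iota.
by apply/allpairsP; exists (i, j); rewrite !mem_iota (ltn_trans lt_ij mem_ij).
Qed.

Lemma uniq_ipairs : uniq ipairs.
Proof. by []. Qed.

Definition berge_core (L : seq (seq nat)) (q : seq nat) : bool :=
  let covers (p : nat * nat) (t : seq nat) := (nth 0 q p.1 \in t) && (nth 0 q p.2 \in t) in
  uniq q && sdr covers L ipairs.

Definition bergeK4b (qs L : seq (seq nat)) : bool :=
  find (berge_core L) qs < size qs.

Lemma bergeK4b_sound n (H : {set {set 'I_n}}) qs L :
  {subset qs <= words 4 (iota 0 n)} -> {in L &, injective (set_of n)} ->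
  {in L, forall t, set_of n t \in H} -> bergeK4b qs L -> has_BergeK4 H.
Proof.
rewrite /bergeK4b -has_find => qs_n injL LH /hasP [q /qs_n].
rewrite mem_words => /andP [/eqP q4 qn].
case/andP=> uq /(sdr_rep [::] uniq_ipairs) [f [fP finj]].
have q_lt (i : 'I_4) : nth 0 q i < n.
  have /(allP qn) : nth 0 q i \in q by rewrite mem_nth ?q4.
  by rewrite /= mem_iota.
have ipairs_ij (i j : 'I_4) : i < j -> (val i, val j) \in ipairs.
  by move=> lt_ij; rewrite mem_ipairs lt_ij ltn_ord.
exists (fun i => Ordinal (q_lt i)), (fun i j => set_of n (f (val i, val j))).
split; [|split].
- move=> i j /(congr1 val) /= /eqP; rewrite nth_uniq ?q4 // => /eqP; exact: val_inj.
- move=> i j /ipairs_ij /fP [fL /andP [qi qj]]; split; first exact: LH.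
  by apply/subsetP => x; rewrite !inE => /orP [] /eqP ->.
- move=> i j k l /ipairs_ij ij /ipairs_ij kl eq_e.
  have [[fij _] [fkl _]] := (fP _ ij, fP _ kl).
  by case: (finj _ _ ij kl (injL _ _ fij fkl eq_e)) => /val_inj -> /val_inj ->.
Qed.

Lemma bergeK4b_complete n (L : seq (seq nat)) :
  has_BergeK4 [set e in map (set_of n) L] -> bergeK4b (words 4 (iota 0 n)) L.
Proof.
case=> v [e [v_inj [eH e_inj]]].
pose rep E := nth [::] L (index E (map (set_of n) L)).
have repK E : E \in map (set_of n) L -> rep E \in L /\ set_of n (rep E) = E.
  move=> EL; have iL : index E (map (set_of n) L) < size L.
    by rewrite -(size_map (set_of n)) index_mem.
  by rewrite mem_nth // -(nth_map _ (set_of n [::])) // nth_index.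
pose f (p : nat * nat) := rep (e (inord p.1) (inord p.2)).
have fP p : p \in ipairs -> [/\ (inord p.1 : 'I_4) < (inord p.2 : 'I_4), f p \in L
                            & set_of n (f p) = e (inord p.1) (inord p.2)].
  case: p => i j; rewrite mem_ipairs => /andP [lt_ij lt_j4].
  have lt_i4 := ltn_trans lt_ij lt_j4.
  have lt_ij' : (inord i : 'I_4) < (inord j : 'I_4) by rewrite !inordK.
  have [+ _] := eH _ _ lt_ij'; rewrite inE => /repK [fL fE].
  by split.
pose q := [seq (v (inord k) : nat) | k <- iota 0 4].
have qE k : k < 4 -> nth 0 q k = v (inord k).
  by move=> lt_k4; rewrite (nth_map 0) ?size_iota // nth_iota.
rewrite /bergeK4b -has_find; apply/hasP; exists q.
  rewrite mem_words size_map size_iota eqxx.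
  by apply/allP => _ /mapP [k _ ->]; rewrite /= mem_iota add0n ltn_ord.
apply/andP; split.
  rewrite map_inj_in_uniq ?iota_uniq // => k k'; rewrite !mem_iota /= => lt_k4 lt_k'4.
  by move=> /= /val_inj /v_inj /(congr1 (@nat_of_ord 4)); rewrite !inordK.
apply: (sdr_of_rep (f := f) uniq_ipairs) => [p p_ij | p p' p_ij p'_ij eq_f].
  have [lt_ij fL fE] := fP p p_ij; split => //.
  have /andP [lt_12 lt_24] : p.1 < p.2 < 4.
    by case: p p_ij {lt_ij fL fE} => i j; rewrite mem_ipairs.
  rewrite !qE ?(ltn_trans lt_12 lt_24) // -!mem_set_of fE.
  have [_ sub] := eH _ _ lt_ij.
  by rewrite !(subsetP sub) // !inE eqxx ?orbT.
have [[lt_ij _ fE] [lt_kl _ fE']] := (fP p p_ij, fP p' p'_ij).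
have [] := e_inj _ _ _ _ lt_ij lt_kl; first by rewrite -fE -fE' eq_f.
case: p p' p_ij p'_ij {lt_ij lt_kl fE fE' eq_f} => i j [k l]; rewrite !mem_ipairs /=.
move=> /andP [lt_ij lt_j4] /andP [lt_kl lt_l4].
move=> /(congr1 (@nat_of_ord 4)) + /(congr1 (@nat_of_ord 4)).
by rewrite !inordK ?(ltn_trans lt_ij) ?(ltn_trans lt_kl) // => -> ->.
Qed.

Lemma forced_has_BergeK4 n K :
  forced (bergeK4b (ksubsets 4 n)) K [::] (ksubsets 3 n) ->
  forall H : {set {set 'I_n}}, triple_system H -> K <= #|H| -> has_BergeK4 H.
Proof.
move=> search H /forallP H3 large.
pose s := [seq t <- ksubsets 3 n | set_of n t \in H].
have large_s : K <= size s.
  apply: leq_trans large _; rewrite -(size_map (set_of n)).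
  apply: leq_trans (card_size _); apply/subset_leq_card/subsetP => e eH.
  have [t] := set_of_enum e; rewrite (eqP (implyP (H3 e) eH)) => t3 te.
  by apply/mapP; exists t; rewrite // mem_filter te eH.
have [t t_s found_t] := forcedP search (filter_subseq _ _) large_s.
apply: (bergeK4b_sound _ _ _ found_t).
- by move=> q; rewrite mem_filter => /andP [].
- by apply: sub_in2 (@set_of_inj 3 n) => x /t_s; rewrite mem_filter => /andP [].
- by move=> x /t_s; rewrite mem_filter => /andP [].
Qed.

Lemma bergeK4_free_system n (L : seq (seq nat)) :
  uniq L -> {subset L <= ksubsets 3 n} -> ~~ bergeK4b (words 4 (iota 0 n)) L ->
  exists H : {set {set 'I_n}}, [/\ triple_system H, #|H| = size L & ~ has_BergeK4 H].
Proof.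
move=> uL L3 free; exists [set e in map (set_of n) L]; split.
- apply/forallP => e; apply/implyP; rewrite inE => /mapP [t /L3 + ->].
  rewrite mem_ksubsets => /and3P [/eqP t3 st tn].
  by rewrite card_set_of ?t3 ?(sorted_uniq ltn_trans ltnn st).
- rewrite cardsE; have /card_uniqP -> : uniq (map (set_of n) L).
    by rewrite (map_inj_in_uniq (sub_in2 L3 (@set_of_inj 3 n))).
  by rewrite size_map.
- by move/bergeK4b_complete; apply/negP.
Qed.

Definition extremal5 : seq (seq nat) :=
  [:: [:: 0; 1; 2]; [:: 0; 1; 3]; [:: 0; 1; 4]; [:: 0; 2; 3]; [:: 0; 2; 4]].

Definition extremal6 : seq (seq nat) :=
  [:: [:: 0; 1; 2]; [:: 0; 1; 3]; [:: 0; 1; 4]; [:: 0; 1; 5];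
      [:: 0; 2; 3]; [:: 0; 4; 5]; [:: 1; 2; 3]; [:: 1; 4; 5]].

Lemma forced5 : forced (bergeK4b (ksubsets 4 5)) 6 [::] (ksubsets 3 5).
Proof. by vm_compute. Qed.

Lemma forced6 : forced (bergeK4b (ksubsets 4 6)) 9 [::] (ksubsets 3 6).
Proof. by vm_compute. Qed.

Lemma extremal5_free : ~~ bergeK4b (words 4 (iota 0 5)) extremal5.
Proof. by vm_compute. Qed.

Lemma extremal6_free : ~~ bergeK4b (words 4 (iota 0 6)) extremal6.
Proof. by vm_compute. Qed.

Theorem theorem2 :
  (* ex_3(5,B) = 5 *)
  ((forall H : {set {set 'I_5}}, triple_system H -> 6 <= #|H| -> has_BergeK4 H) /\
   (exists H : {set {set 'I_5}}, [/\ triple_system H, #|H| = 5 & ~ has_BergeK4 H])) /\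
  (* ex_3(6,B) = 8 *)
  ((forall H : {set {set 'I_6}}, triple_system H -> 9 <= #|H| -> has_BergeK4 H) /\
   (exists H : {set {set 'I_6}}, [/\ triple_system H, #|H| = 8 & ~ has_BergeK4 H])).
Proof.
split; split.
- exact: forced_has_BergeK4 forced5.
- by apply: bergeK4_free_system extremal5_free => //; apply/allP; vm_compute.
- exact: forced_has_BergeK4 forced6.
- by apply: bergeK4_free_system extremal6_free => //; apply/allP; vm_compute.
Qed.
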